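(* Let $(X,d_X)$ be a compact metric space, let $0<\gamma<1$, let $(\phi_j)_{j\in\mathbb{N}}$ be maps $\phi_j:X\to X$ with $d_X(\phi_j(x_1),\phi_j(x_2))\le \gamma\, d_X(x_1,x_2)$ for all $j$ and $x_1,x_2\in X$, and let $(q_j)_{j\in\mathbb{N}}$ be real numbers with $q_j\le 0$ and $\sup_j q_j=0$. Let $\nu\in I(X)$ be the unique idempotent probability with $M_{\phi,q}(\nu)=\nu$, where $M_{\phi,q}(\mu)(f):=\sup_{j\in\mathbb{N}}(q_j+\mu(f\circ\phi_j))$. For each $n\in\mathbb{N}$ let $\alpha_n:=\max_{1\le j\le n} q_j$, $\tilde q_j:=q_j-\alpha_n$ for $1\le j\le n$, $M_{\phi,\tilde q,n}(\mu)(f):=\max_{1\le j\le n}(\tilde q_j+\mu(f\circ\phi_j))$, and let $\mu_n\in I(X)$ be the unique idempotent probability with $M_{\phi,\tilde q,n}(\mu_n)=\mu_n$. Let $(\mu_{n_i})_{i\in\mathbb{N}}$ be any subsequence that converges in the topology $\tau_p$. Then $\mu_{n_i}\to\nu$ in $\tau_p$; in particular the sequence $(\mu_n)$ converges in the $\tau_p$ topology (to $\nu$).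
   Context: $C(X,\mathbb{R})$ is the set of continuous real functions on $X$. $I(X)$ is the set of functionals $m:C(X,\mathbb{R})\to\mathbb{R}$ with $m(a+f)=a+m(f)$ for $a\in\mathbb{R}$, $m(\max(f,g))=\max(m(f),m(g))$, and $m(0)=0$. The topology $\tau_p$ on $I(X)$ is that of pointwise convergence: $\mu_k\to\mu$ iff $\mu_k(f)\to\mu(f)$ for every $f\in C(X,\mathbb{R})$. The existence and uniqueness of $\nu$ and of each $\mu_n$ (fixed points of the respective contractive operators) are part of the setting. *)

From HB Require Import structures.
From mathcomp Require Import all_boot all_order all_algebra.
From mathcomp Require Import all_classical all_reals all_analysis.
Set Implicit Arguments. Unset Strict Implicit. Unset Printing Implicit Defensive.
Import Order.TTheory GRing.Theory Num.Theory.
Import numFieldTopology.Exports.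
Local Open Scope classical_set_scope.
Local Open Scope ring_scope.

(* Idempotent probabilities (Maslov measures) on X: functionals on C(X,R),
   represented as maps (X -> R) -> R whose behaviour only matters on
   continuous functions. *)
Definition idem_prob {R : realType} {X : topologicalType}
  (m : (X -> R) -> R) : Prop :=
  [/\ (forall (a : R) (f : X -> R), continuous f -> m (fun x => a + f x) = a + m f),
      (forall f g : X -> R, continuous f -> continuous g ->
          m (fun x => Num.max (f x) (g x)) = Num.max (m f) (m g))
    & m (fun _ => 0) = 0].

Definition eq_on_C {R : realType} {X : topologicalType}
  (m1 m2 : (X -> R) -> R) : Prop :=
  forall f : X -> R, continuous f -> m1 f = m2 f.

Definition tau_p_cvg {R : realType} {X : topologicalType}
  (u : nat -> (X -> R) -> R) (m : (X -> R) -> R) : Prop :=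
  forall f : X -> R, continuous f -> (fun k => u k f) @ \oo --> m f.

Definition M_op {R : realType} {X : topologicalType}
  (phi : nat -> X -> X) (q : nat -> R) (mu : (X -> R) -> R) : (X -> R) -> R :=
  fun f => sup [set q j + mu (f \o phi j) | j in [set: nat]].

(* alpha_n = max_{j <= n} q_j  (0-based indices: the first n.+1 maps) *)
Definition alpha {R : realType} (q : nat -> R) (n : nat) : R :=
  \big[Num.max/q 0%N]_(j < n.+1) q j.

Definition M_op_n {R : realType} {X : topologicalType}
  (phi : nat -> X -> X) (q : nat -> R) (n : nat) (mu : (X -> R) -> R)
  : (X -> R) -> R :=
  fun f => \big[Num.max/(q 0%N - alpha q n + mu (f \o phi 0%N))]_(j < n.+1)
             (q j - alpha q n + mu (f \o phi j)).

From HB Require Import structures.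
From mathcomp Require Import all_boot all_order all_algebra.
From mathcomp Require Import all_classical all_reals all_analysis.
From mathcomp Require Import ring lra.
Import Order.TTheory GRing.Theory Num.Theory.
Import numFieldTopology.Exports.
Local Open Scope classical_set_scope.
Local Open Scope ring_scope.

(* Let maxop n be M_{phi,q~,n} without the normalisation by alpha_n, so that
   mu_n = maxop n mu_n - alpha_n and, iterating k times,
   mu_n f = (maxop n)^k mu_n f - k alpha_n.  Being monotone and commuting with
   constants, (maxop n)^k only sees the functions f o phi_j1 o ... o phi_jk,
   whose oscillation is at most that of f at scale gamma^k diam X; so for k
   large mu_n may be replaced by the Dirac mass at a point x0, up to e.
   Applied to that Dirac mass, (maxop n)^k f is at most nu f + e, because nu
   is a fixed point of the larger operator M_{phi,q}, and at least
   nu f - e - d for n large, because the sup defining M_{phi,q} is approached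
   by finitely many indices.  Finally alpha_n -> sup q = 0, hence
   k alpha_n -> 0. *)

Section idem_prob_theory.
Context {R : realType} {X : topologicalType} {m : (X -> R) -> R}.
Hypothesis mI : idem_prob m.

Lemma idem_prob_cst (a : R) : m (fun _ => a) = a.
Proof.
case: mI => mD _ m0.
by have := mD a (fun _ => 0) (@cst_continuous _ _ 0); rewrite m0 addr0.
Qed.

Lemma idem_prob_le (f g : X -> R) : continuous f -> continuous g ->
  (forall x, f x <= g x) -> m f <= m g.
Proof.
case: mI => _ mmax _ cf cg fg.
have -> : g = (fun x => Num.max (f x) (g x)).
  by apply: funext => x; rewrite max_r.
by rewrite mmax // le_max lexx.
Qed.

Lemma idem_prob_dist_cst (f : X -> R) (c e : R) : continuous f ->
  (forall x, `|f x - c| <= e) -> `|m f - c| <= e.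
Proof.
move=> cf fce.
have ccst (a : R) : continuous (fun _ : X => a) by exact: cst_continuous.
rewrite ler_distl -[c - e]idem_prob_cst -[c + e]idem_prob_cst.
by apply/andP; split; apply: idem_prob_le => // x;
  have := fce x; rewrite ler_distl => /andP[].
Qed.

End idem_prob_theory.

Lemma compact_locally_ubounded (R : realType) (T : topologicalType)
    (h : T -> R) :
  compact [set: T] ->
  (forall x : T, exists c : R, \forall y \near x, h y <= c) ->
  exists M, forall x, h x <= M.
Proof.
move=> Tcpt hloc.
have : \forall M \near +oo, [set: T] `<=` (fun x => h x < M).
  have cover := (compact_near_coveringP _).1 Tcpt R (+oo : set_system R)
    (fun M x => h x < M).
  apply: cover => x _.
  have [c hc] := hloc x; near=> y M.
  have hyc : h y <= c by near: y.
  have cM : c < M by near: M; apply: nbhs_pinfty_gt; exact: num_real.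
  exact: le_lt_trans hyc cM.
by move=> /filter_ex[M hM]; exists M => x; exact/ltW/hM.
Unshelve. all: by end_near.
Qed.

Section compact_metric.
Context {R : realType} {X : metricType R}.
Hypothesis Xcpt : compact [set: X].

Lemma near_mdist_lt (x : X) (r : R) : 0 < r -> \forall y \near x, mdist x y < r.
Proof.
by move=> r0; apply/nbhs_ballP; exists r => // y; rewrite ballEmdist.
Qed.

Lemma continuous_ubounded (f : X -> R) :
  continuous f -> exists M, forall x, f x <= M.
Proof.
move=> cf; apply: compact_locally_ubounded Xcpt _ => x; exists (f x + 1).
near=> y; have : `|f x - f y| < 1.
  by near: y; exact: (cvgrPdist_lt _ _).1 (cf x) _ ltr01.
by rewrite ltr_norml => /andP[? ?]; lra.
Unshelve. all: by end_near.
Qed.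

Lemma mdist_ubounded (x0 : X) : exists D, forall x, mdist x x0 <= D.
Proof.
apply: compact_locally_ubounded Xcpt _ => x; exists (mdist x x0 + 1).
near=> y; have : mdist x y < 1 by near: y; exact: near_mdist_lt.
by have := metric_triangle y x x0; rewrite (metric_sym y x); lra.
Unshelve. all: by end_near.
Qed.

Lemma compact_unif_continuous (f : X -> R) : continuous f -> forall e, 0 < e ->
  exists2 d, 0 < d & forall x y, mdist x y < d -> `|f x - f y| < e.
Proof.
move=> cf e e0.
have : \forall d \near 0^'+, [set: X] `<=`
    [set x | forall y, mdist x y < d -> `|f x - f y| < e].
  have cover := (compact_near_coveringP _).1 Xcpt R (0 : R)^'+
    (fun d x => forall y, mdist x y < d -> `|f x - f y| < e).
  apply: cover => x _.
  have e20 : 0 < e / 2 by rewrite divr_gt0.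
  have [r /= r0 fr] := (nbhs_ballP _ _).1 ((cvgrPdist_lt _ _).1 (cf x) _ e20).
  have r20 : 0 < r / 2 by rewrite divr_gt0.
  near=> x' d => y x'y.
  have xx' : mdist x x' < r / 2 by near: x'; exact: near_mdist_lt.
  have dr : d < r / 2 by near: d; exact: nbhs_right_lt.
  have xy : mdist x y < r.
    apply: le_lt_trans (metric_triangle x x' y) _; rewrite [r]splitr.
    by apply: ltrD => //; exact: lt_trans x'y dr.
  have fxx' : `|f x - f x'| < e / 2 by apply: fr; rewrite ballEmdist /=; lra.
  have fxy : `|f x - f y| < e / 2 by apply: fr; rewrite ballEmdist.
  move: fxx' fxy; rewrite !ltr_distl; lra.
move=> /(filterI (@nbhs_right_gt R 0)) /filter_ex[d [d0 fd]].
by exists d => // x y; exact: fd.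
Unshelve. all: by end_near.
Qed.

End compact_metric.

Lemma lipschitz_continuous (R : realType) (X Y : metricType R) (g : X -> Y)
    (k : R) :
  (forall x y, mdist (g x) (g y) <= k * mdist x y) -> continuous g.
Proof.
move=> gk x; apply/metricType_numDomainType.cvgrPdist_lt => e e0.
have k10 : 0 < `|k| + 1 by rewrite ltr_wpDl.
near=> y; apply: le_lt_trans (gk x y) _.
have xy : mdist x y < e / (`|k| + 1).
  by near: y; apply: near_mdist_lt; rewrite divr_gt0.
have : k * mdist x y <= `|k| * mdist x y.
  by rewrite ler_wpM2r ?mdist_ge0 ?ler_norm.
rewrite ltr_pdivlMr // in xy; have := mdist_ge0 x y; nra.
Unshelve. all: by end_near.
Qed.

Definition osc_le {R : realType} {X : metricType R} (f : X -> R) (r e : R) :=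
  forall x y : X, mdist x y <= r -> `|f x - f y| <= e.

Lemma osc_le_comp (R : realType) (X : metricType R) (g : X -> X) (k r e : R)
    (f : X -> R) :
  0 <= k -> (forall x y, mdist (g x) (g y) <= k * mdist x y) ->
  osc_le f (k * r) e -> osc_le (f \o g) r e.
Proof.
move=> k0 gk fr x y xy; apply: fr.
by apply: le_trans (gk x y) _; exact: ler_wpM2l.
Qed.

Section alpha.
Context {R : realType} (q : nat -> R).

Lemma le_alpha {n j : nat} : (j <= n)%N -> q j <= alpha q n.
Proof.
move=> jn.
exact: (le_bigmax _ (fun i : 'I_n.+1 => q i) (@Ordinal n.+1 j jn)).
Qed.

Lemma alpha_le_sup (n : nat) :
  has_ubound (range q) -> alpha q n <= sup (range q).
Proof.
by move=> qub; apply: bigmax_le => [|i _]; apply: ub_le_sup => //; exists i.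
Qed.

Lemma alpha_cvg :
  has_ubound (range q) -> alpha q n @[n --> \oo] --> sup (range q).
Proof.
move=> qub; apply/cvgrPdist_le => e e0.
have qsup : has_sup (range q) by split => //; exists (q 0%N), 0%N.
have [_ [j _ <-] qj] := sup_adherent e0 qsup.
near=> n; have jn : (j <= n)%N by near: n; exact: nbhs_infty_ge.
have := le_alpha jn; have := alpha_le_sup n qub.
by rewrite ler_norml => ? ?; apply/andP; split; lra.
Unshelve. all: by end_near.
Qed.

End alpha.

Section maxop.
Context {R : realType} {X : topologicalType}.
Variables (phi : nat -> X -> X) (q : nat -> R).
Implicit Types (m : (X -> R) -> R) (f : X -> R).

Definition maxop (n : nat) m : (X -> R) -> R :=
  fun f => \big[Num.max/(q 0%N + m (f \o phi 0%N))]_(j < n.+1)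
              (q j + m (f \o phi j)).

Lemma le_maxop {n j : nat} m f :
  (j <= n)%N -> q j + m (f \o phi j) <= maxop n m f.
Proof.
move=> jn.
exact: (le_bigmax _ (fun i : 'I_n.+1 => q i + m (f \o phi i))
                   (@Ordinal n.+1 j jn)).
Qed.

Lemma maxop_le n m f (c : R) :
  (forall j, (j <= n)%N -> q j + m (f \o phi j) <= c) -> maxop n m f <= c.
Proof.
by move=> mc; apply: bigmax_le => [|i _]; apply: mc; rewrite // -ltnS.
Qed.

Lemma maxop_dist n m1 m2 f (c e : R) :
  (forall j, (j <= n)%N -> `|m1 (f \o phi j) - (m2 (f \o phi j) + c)| <= e) ->
  `|maxop n m1 f - (maxop n m2 f + c)| <= e.
Proof.
move=> m12.
have le12 : maxop n m1 f <= maxop n m2 f + (c + e).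
  apply: maxop_le => j jn; apply: le_trans (lerD (le_maxop m2 f jn) (lexx _)).
  by have := m12 j jn; rewrite ler_distl => /andP[]; lra.
have le21 : maxop n m2 f <= maxop n m1 f + (e - c).
  apply: maxop_le => j jn; apply: le_trans (lerD (le_maxop m1 f jn) (lexx _)).
  by have := m12 j jn; rewrite ler_distl => /andP[]; lra.
by rewrite ler_distl; apply/andP; split; lra.
Qed.

Lemma M_op_nE n m f : M_op_n phi q n m f = maxop n m f - alpha q n.
Proof.
rewrite /M_op_n /maxop.
rewrite (big_morph (fun x => x - alpha q n) (fun x y => addr_maxl x y _) erefl).
by rewrite addrAC; apply: eq_bigr => j _; rewrite addrAC.
Qed.

End maxop.

Section fixed_point_approximation.
Context {R : realType} {X : metricType R} {gamma : R} {phi : nat -> X -> X}.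
Context {q : nat -> R} {nu : (X -> R) -> R} {mu : nat -> (X -> R) -> R}.
Context {x0 : X} {D : R}.
Hypothesis Xcpt : compact [set: X].
Hypotheses (gamma_gt0 : 0 < gamma) (gamma_lt1 : gamma < 1).
Hypothesis phi_contr :
  forall j x1 x2, mdist (phi j x1) (phi j x2) <= gamma * mdist x1 x2.
Hypotheses (q_le0 : forall j, q j <= 0) (q_sup : sup (range q) = 0).
Hypotheses (nu_I : idem_prob nu) (nu_fix : eq_on_C (M_op phi q nu) nu).
Hypotheses (mu_I : forall n, idem_prob (mu n))
  (mu_fix : forall n, eq_on_C (M_op_n phi q n (mu n)) (mu n)).
Hypothesis D_bound : forall x, mdist x x0 <= D.
Implicit Types (f : X -> R) (e d : R) (n k j : nat).

Let C n k : (X -> R) -> R := iter k (maxop phi q n) (fun g => g x0).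

Lemma continuous_comp_phi f j : continuous f -> continuous (f \o phi j).
Proof.
move=> cf x; apply: continuous_comp (cf _).
exact: lipschitz_continuous (phi_contr j) x.
Qed.

Lemma osc_le_comp_phi {f e k} j :
  osc_le f (gamma ^+ k.+1 * D) e -> osc_le (f \o phi j) (gamma ^+ k * D) e.
Proof.
by rewrite exprS -mulrA; apply: osc_le_comp (ltW gamma_gt0) (phi_contr j).
Qed.

Let has_sup_nu_terms f :
  continuous f -> has_sup [set q j + nu (f \o phi j) | j in [set: nat]].
Proof.
move=> cf; split; first by exists (q 0%N + nu (f \o phi 0%N)), 0%N.
have [M fM] := continuous_ubounded Xcpt f cf; exists M => _ [j _ <-].
have : nu (f \o phi j) <= M.
  rewrite -[M](idem_prob_cst nu_I); apply: idem_prob_le => //.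
  - exact: continuous_comp_phi.
  - exact: cst_continuous.
  - by move=> x; exact: fM.
have := q_le0 j; lra.
Qed.

Lemma nu_term_le f j : continuous f -> q j + nu (f \o phi j) <= nu f.
Proof.
move=> cf; rewrite -(nu_fix f cf) /M_op.
by apply: ub_le_sup; [case: (has_sup_nu_terms f cf) | exists j].
Qed.

Lemma nu_term_approx f d : continuous f -> 0 < d ->
  exists j, nu f - d < q j + nu (f \o phi j).
Proof.
move=> cf d0; have [_ [j _ <-] fj] := sup_adherent d0 (has_sup_nu_terms f cf).
by exists j; rewrite -(nu_fix f cf).
Qed.

Let dist_x0 {m : (X -> R) -> R} {f e} : idem_prob m -> continuous f ->
  osc_le f (gamma ^+ 0 * D) e -> `|m f - f x0| <= e.
Proof.
move=> mI cf fe; apply: (idem_prob_dist_cst mI) cf _ => x.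
by apply: fe; rewrite expr0 mul1r.
Qed.

Lemma iter_maxop_le_nu n k f e : continuous f ->
  osc_le f (gamma ^+ k * D) e -> C n k f <= nu f + e.
Proof.
elim: k f e => [|k IH] f e cf fe /=.
  by have := dist_x0 nu_I cf fe; rewrite ler_distl => /andP[]; lra.
apply: maxop_le => j _.
have := IH _ _ (continuous_comp_phi f j cf) (osc_le_comp_phi j fe).
have := nu_term_le f j cf; lra.
Qed.

Lemma iter_maxop_ge_nu k f e d : continuous f ->
  osc_le f (gamma ^+ k * D) e -> 0 < d ->
  \forall n \near \oo, nu f - e - d <= C n k f.
Proof.
elim: k f e d => [|k IH] f e d cf fe d0.
  near=> n => /=.
  by have := dist_x0 nu_I cf fe; rewrite ler_distl => /andP[]; lra.
have d20 : 0 < d / 2 by rewrite divr_gt0.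
have [j fj] := nu_term_approx f (d / 2) cf d20.
have IHj := IH _ _ _ (continuous_comp_phi f j cf) (osc_le_comp_phi j fe) d20.
near=> n; have jn : (j <= n)%N by near: n; exact: nbhs_infty_ge.
have := le_maxop phi q (C n k) f jn.
have : nu (f \o phi j) - e - d / 2 <= C n k (f \o phi j) by near: n.
rewrite /= -/(C n k); lra.
Unshelve. all: by end_near.
Qed.

Lemma mu_iter_maxop_dist n k f e : continuous f ->
  osc_le f (gamma ^+ k * D) e -> `|mu n f - (C n k f - k%:R * alpha q n)| <= e.
Proof.
elim: k f e => [|k IH] f e cf fe.
  by rewrite mul0r subr0; exact: dist_x0 (mu_I n) cf fe.
rewrite -(mu_fix n f cf) M_op_nE /=.
have -> a b : a - alpha q n - (b - k.+1%:R * alpha q n) =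
              a - (b + - (k%:R * alpha q n)) by rewrite -natr1; ring.
apply: maxop_dist => j _.
exact: IH _ _ (continuous_comp_phi f j cf) (osc_le_comp_phi j fe).
Qed.

Lemma tau_p_cvg_fixed_points : tau_p_cvg mu nu.
Proof.
move=> f cf; apply/cvgrPdist_le => eps eps0.
pose e := eps / 3; have e0 : 0 < e by rewrite divr_gt0.
have [d d0 fd] := compact_unif_continuous Xcpt f cf _ e0.
have [k gkD] : exists k, gamma ^+ k * D < d.
  have : gamma ^+ k * D @[k --> \oo] --> 0.
    rewrite -(mul0r D); apply: cvgMr_tmp.
    by apply: cvg_expr; rewrite gtr0_norm.
  move=> /cvgrPdist_lt /(_ _ d0) /filter_ex [k]; rewrite sub0r normrN => gkD.
  by exists k; exact: le_lt_trans (ler_norm _) gkD.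
have fe : osc_le f (gamma ^+ k * D) e.
  by move=> x y xy; apply/ltW/fd; exact: le_lt_trans xy gkD.
have qub : has_ubound (range q) by exists 0 => _ [j _ <-].
have kalpha : k%:R * alpha q n @[n --> \oo] --> 0.
  by rewrite -(mulr0 k%:R) -q_sup; apply: cvgMl_tmp; exact: alpha_cvg.
near=> n.
have := iter_maxop_le_nu n k f e cf fe.
have := mu_iter_maxop_dist n k f e cf fe.
have : nu f - e - e <= C n k f by near: n; exact: iter_maxop_ge_nu.
have : - e <= k%:R * alpha q n.
  near: n; move/cvgrPdist_le: kalpha => /(_ _ e0); apply: filterS => n.
  by rewrite sub0r normrN ler_norml => /andP[].
have : k%:R * alpha q n <= 0.
  by rewrite mulr_ge0_le0 // -q_sup (alpha_le_sup q n qub).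
rewrite ler_distl /e => ? ? ? /andP[? ?] ?.
by rewrite ler_distl; apply/andP; split; lra.
Unshelve. all: by end_near.
Qed.

End fixed_point_approximation.

Lemma tau_p_cvg_subseq {R : realType} {X : topologicalType}
    (u : nat -> (X -> R) -> R) (m : (X -> R) -> R) (sub : nat -> nat) :
  (forall i, (sub i < sub i.+1)%N) -> tau_p_cvg u m -> tau_p_cvg (u \o sub) m.
Proof.
move=> sub_incr um f cf.
have sub_ge i : (i <= sub i)%N.
  by elim: i => // i IH; exact: leq_ltn_trans IH (sub_incr i).
have sub_oo : sub i @[i --> \oo] --> \oo.
  move=> P [N _ NP]; exists N => // i /= Ni; apply: NP.
  exact: leq_trans Ni (sub_ge i).
exact: cvg_comp sub_oo (um f cf).
Qed.

Theorem theorem3p4 (R : realType) (X : metricType R)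
  (Xcpt : compact [set: X]) (gamma : R)
  (gamma_gt0 : 0 < gamma) (gamma_lt1 : gamma < 1)
  (phi : nat -> X -> X)
  (phi_contr : forall (j : nat) (x1 x2 : X),
      mdist (phi j x1) (phi j x2) <= gamma * mdist x1 x2)
  (q : nat -> R) (q_le0 : forall j, q j <= 0)
  (q_sup : sup [set q j | j in [set: nat]] = 0)
  (nu : (X -> R) -> R) (nu_I : idem_prob nu)
  (nu_fix : eq_on_C (M_op phi q nu) nu)
  (mu : nat -> (X -> R) -> R) (mu_I : forall n, idem_prob (mu n))
  (mu_fix : forall n, eq_on_C (M_op_n phi q n (mu n)) (mu n)) :
  (forall (sub : nat -> nat) (m : (X -> R) -> R),
      (forall i, (sub i < sub i.+1)%N) ->
      idem_prob m -> tau_p_cvg (fun i => mu (sub i)) m ->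
      tau_p_cvg (fun i => mu (sub i)) nu)
  /\ tau_p_cvg mu nu.
Proof.
have mu_nu : tau_p_cvg mu nu.
  have [[x0 _]|noX] := pselect (exists x : X, True).
    have [D D_bound] := mdist_ubounded Xcpt x0.
    exact: tau_p_cvg_fixed_points Xcpt gamma_gt0 gamma_lt1 phi_contr q_le0 q_sup
      nu_I nu_fix mu_I mu_fix D_bound.
  move=> f cf; have -> : f = fun _ => 0.
    by apply: funext => x; case: noX; exists x.
  rewrite (idem_prob_cst nu_I).
  under eq_fun do rewrite (idem_prob_cst (mu_I _)).
  exact: cvg_cst.
by split=> // sub m sub_incr _ _; exact: tau_p_cvg_subseq.
Qed.
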